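(* Let $M=A+\Delta-\sigma vv^{\mathsf T}$ be a generalized modularity matrix, let $x\neq0$ satisfy $Mx=m_Gx$ with $v^{\mathsf T}x\ge 0$, and let $y$ be an entrywise positive eigenvector of $A+\Delta$ associated with $\lambda_1(A+\Delta)$. Then for every $\varepsilon\ge 0$, the set $S=\{i\in V: x_i+\varepsilon y_i\ge 0\}$ induces a connected subgraph $G(S)$ of $G$.
   Context: Let $V=\{1,\dots,n\}$ and let $A\in\mathbb{R}^{n\times n}$ be the adjacency matrix of an undirected connected weighted graph $G$ on $V$, possibly with loops, i.e. $A=(a_{ij})$ is symmetric, entrywise nonnegative and irreducible. A generalized modularity matrix is any matrix $M=A+\Delta-\sigma vv^{\mathsf T}$ where $\Delta$ is a real diagonal $n\times n$ matrix, $v\in\mathbb{R}^n$ is a nonzero entrywise nonnegative vector, and $\sigma>0$. Eigenvalues of a real symmetric matrix $X$ are ordered $\lambda_1(X)\ge\cdots\ge\lambda_n(X)$; $m_G:=\lambda_1(M)$. (An entrywise positive eigenvector $y$ for $\lambda_1(A+\Delta)$ exists by Perron–Frobenius theory.) For $S\subseteq V$, $G(S)$ denotes the subgraph induced by $S$, whose adjacency matrix is the principal submatrix $A(S)$; it is connected if the graph on vertex set $S$ in which distinct $i,j$ are adjacent iff $a_{ij}>0$ is connected. *)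

From HB Require Import structures.
From mathcomp Require Import all_boot all_order all_algebra.
Set Implicit Arguments. Unset Strict Implicit. Unset Printing Implicit Defensive.
Import Order.TTheory GRing.Theory Num.Theory.
Local Open Scope ring_scope.

Definition adj_in (R : realFieldType) (n : nat) (A : 'M[R]_n)
  (S : {set 'I_n}) : rel 'I_n :=
  fun i j => [&& i \in S, j \in S, i != j & 0 < A i j].

Definition induced_connected (R : realFieldType) (n : nat) (A : 'M[R]_n)
  (S : {set 'I_n}) : Prop :=
  forall i j, i \in S -> j \in S -> connect (adj_in A S) i j.

Definition graph_connected (R : realFieldType) (n : nat) (A : 'M[R]_n) : Prop :=
  induced_connected A [set: 'I_n].

Definition is_lambda1 (R : realFieldType) (n : nat) (X : 'M[R]_n) (lam : R)
  : Prop :=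
  eigenvalue X lam /\ (forall a, eigenvalue X a -> a <= lam).

From HB Require Import structures.
From mathcomp Require Import all_boot all_order all_algebra.
From mathcomp Require Import complex ring lra.
Set Implicit Arguments.
Unset Strict Implicit.
Unset Printing Implicit Defensive.
Import Order.TTheory GRing.Theory Num.Theory.
Local Open Scope ring_scope.

(* Write B = A + Delta and z = x + eps y.  From M x = m_G x we get
   B x = m_G x + sigma (v^T x) v, and the Rayleigh quotient of B at x gives
   m_G <= lambda_1(B); hence B z = m_G z + r with r >= 0.
   Suppose two vertices of S = {z >= 0} lie in different components of G(S).
   Let U1 be the component of one of them, U2 = S \ U1, and let w be al z on U1,
   be z on U2 and 0 off S, with (al, be) <> 0 chosen so that v^T w = 0.  As no
   edge joins U1 to U2, for k in S the k-th entry of (B - m_G) w is the weight of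
   k times the excess r_k - sum_{l notin S} a_kl z_l >= 0.  So
   w^T M w = w^T B w >= m_G w^T w, and since m_G = lambda_1(M), w is an
   eigenvector of M, i.e. (B - m_G) w = 0.  But G is connected, so U1 and U2
   each contain a vertex adjacent to a vertex where z < 0, and there the excess
   is positive: al = be = 0. *)

Lemma col_dotE (R : pzSemiRingType) n (u w : 'cV[R]_n) :
  (u^T *m w) 0 0 = \sum_k u k 0 * w k 0.
Proof. by rewrite mxE; apply: eq_bigr => k _; rewrite mxE. Qed.

Lemma col_dot_self_ge0 (R : realDomainType) n (u : 'cV[R]_n) : 0 <= (u^T *m u) 0 0.
Proof. by rewrite col_dotE sumr_ge0 // => k _; rewrite -expr2 sqr_ge0. Qed.

Lemma col_dot_self_eq0 (R : realDomainType) n (u : 'cV[R]_n) :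
  ((u^T *m u) 0 0 == 0) = (u == 0).
Proof.
apply/idP/eqP => [|->]; last by rewrite mulmx0 mxE.
rewrite col_dotE psumr_eq0 => [/allP u0|k _]; last by rewrite -expr2 sqr_ge0.
apply/matrixP => k j; rewrite ord1 mxE.
by have := u0 k (mem_index_enum k); rewrite -expr2 sqrf_eq0 => /eqP.
Qed.

Lemma form_sym (R : comPzSemiRingType) n (Q : 'M[R]_n) (u w : 'cV[R]_n) :
  Q^T = Q -> (u^T *m Q *m w) 0 0 = (w^T *m Q *m u) 0 0.
Proof.
move=> sQ; rewrite -[u^T *m Q *m w]trmxK mxE.
by rewrite !trmx_mul !trmxK sQ mulmxA.
Qed.

Section NormalMatrix.
Variable C : numClosedFieldType.
Local Open Scope sesquilinear_scope.

Lemma eigenvalue_spectral_diag n (A : 'M[C]_n) k :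
  A \is normalmx -> eigenvalue A (spectral_diag A 0 k).
Proof.
move=> /orthomx_spectralP; set P := spectralmx A; set D := spectral_diag A => AE.
have /unitarymxP PPt : P \is unitarymx := spectral_unitarymx A.
apply/eigenvalueP; exists (row k P).
  have PA : P *m A = diag_mx D *m P.
    by rewrite AE invmx_unitary ?spectral_unitarymx // !mulmxA PPt mul1mx.
  by rewrite -row_mul PA row_mul row_diag_mx -scalemxAl -rowE.
apply: contraTneq isT => Pk0.
have := congr1 (fun B : 'rV[C]_n => B 0 k) (row1 C k).
by rewrite -PPt row_mul Pk0 mul0mx !mxE !eqxx /= => /esym/eqP; rewrite oner_eq0.
Qed.

Lemma normalmx_form_le n (A : 'M[C]_n) (lam : C) (u : 'rV[C]_n) :
  A \is normalmx -> (forall k, spectral_diag A 0 k <= lam) ->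
  (u *m A *m u^t*) 0 0 <= lam * (u *m u^t*) 0 0.
Proof.
move=> /orthomx_spectralP; set P := spectralmx A; set D := spectral_diag A => AE D_le.
have P_unitary : P \is unitarymx := spectral_unitarymx A.
have PtP : P^t* *m P = 1%:M by rewrite -invmx_unitary // mulVmx ?spectral_unit.
pose c := u *m P^t*.
have ct : c^t* = P *m u^t* by rewrite /c trmx_mul map_mxM trmxCK.
have -> : u *m A *m u^t* = c *m diag_mx D *m c^t*.
  by rewrite ct AE invmx_unitary // /c !mulmxA.
have -> : u *m u^t* = c *m c^t* by rewrite ct /c mulmxA -(mulmxA u) PtP mulmx1.
clearbody c; rewrite mul_mx_diag !mxE mulr_sumr; apply: ler_sum => k _.
by rewrite !mxE mulrAC [lam * _]mulrC ler_wpM2l ?mul_conjC_ge0 ?D_le.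
Qed.
End NormalMatrix.

Lemma rayleigh_le (R : rcfType) n (X : 'M[R]_n) (lam : R) :
  X^T = X -> (forall a, eigenvalue X a -> a <= lam) ->
  forall w : 'cV[R]_n, (w^T *m X *m w) 0 0 <= lam * (w^T *m w) 0 0.
Proof.
(* Complexify X and diagonalise the resulting Hermitian matrix unitarily. *)
move=> sX lam_max w; pose Xc := map_mx (real_complex R) X.
have Xc_herm : Xc \is hermsymmx.
  apply: realsym_hermsym.
    by apply/is_hermitianmxP; rewrite expr0 scale1r map_mx_id // /Xc map_trmx sX.
  by apply/mxOverP => i j; rewrite mxE complex_real.
have D_le k : spectral_diag Xc 0 k <= (lam%:C)%C.
  have /complex_realP [a Da] := mxOverP (hermitian_spectral_diag_real Xc_herm) 0 k.
  rewrite Da lecR; apply: lam_max.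
  by have := eigenvalue_spectral_diag k (hermitian_normalmx Xc_herm); rewrite Da eigenvalue_map.
have := normalmx_form_le (map_mx (real_complex R) w^T) (hermitian_normalmx Xc_herm) D_le.
have -> : (map_mx (real_complex R) w^T ^t*)%sesqui = map_mx (real_complex R) w.
  by apply/matrixP => i j; rewrite !mxE conj_Creal // complex_real.
by rewrite -!map_mxM !mxE -rmorphM lecR.
Qed.

Lemma rayleigh_supereigen_le (R : rcfType) n (X : 'M[R]_n) (lam m : R) (x u : 'cV[R]_n) :
  X^T = X -> (forall a, eigenvalue X a -> a <= lam) ->
  x != 0 -> X *m x = m *: x + u -> 0 <= (x^T *m u) 0 0 -> m <= lam.
Proof.
move=> sX lam_max x_neq0 Xx xu_ge0.
have := rayleigh_le sX lam_max x.
rewrite -mulmxA Xx mulmxDr -scalemxAr -trace_mx11 mxtraceD mxtraceZ !trace_mx11 => x_le.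
have xx_gt0 : 0 < (x^T *m x) 0 0 by rewrite lt_def col_dot_self_eq0 x_neq0 col_dot_self_ge0.
by rewrite -(ler_pM2r xx_gt0); lra.
Qed.

Lemma psd_form_eq0 (R : realFieldType) n (Q : 'M[R]_n) (w : 'cV[R]_n) :
  Q^T = Q -> (forall u : 'cV[R]_n, 0 <= (u^T *m Q *m u) 0 0) ->
  (w^T *m Q *m w) 0 0 = 0 -> Q *m w = 0.
Proof.
(* The form along the line w + t Q w is 2 t |Q w|^2 + t^2 (Q w)^T Q (Q w) >= 0. *)
move=> sQ Q_psd w0; set g := Q *m w.
set a := (g^T *m g) 0 0; set b := (g^T *m Q *m g) 0 0.
have gQw : (g^T *m Q *m w) 0 0 = a by rewrite -mulmxA.
have Q_psd_line t : 0 <= 2 * t * a + t ^+ 2 * b.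
  have := Q_psd (w + t *: g).
  rewrite !linearD !linearZ /= !mulmxDl -!scalemxAl.
  rewrite -trace_mx11 !(mxtraceD, mxtraceZ) !trace_mx11.
  rewrite w0 gQw form_sym // gQw -/b => Q_psd_t; nra.
have a_ge0 : 0 <= a := col_dot_self_ge0 g.
have b_ge0 : 0 <= b := Q_psd g.
have : a == 0.
  pose s := a / (b + 1).
  have s_ge0 : 0 <= s by rewrite divr_ge0 ?addr_ge0.
  have sE : s * (b + 1) = a by rewrite divfK // gt_eqF // ltr_wpDl.
  have := Q_psd_line (- s); nra.
by rewrite col_dot_self_eq0 => /eqP.
Qed.

Lemma rayleigh_eq (R : realFieldType) n (X : 'M[R]_n) (lam : R) (w : 'cV[R]_n) :
  X^T = X -> (forall u : 'cV[R]_n, (u^T *m X *m u) 0 0 <= lam * (u^T *m u) 0 0) ->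
  lam * (w^T *m w) 0 0 <= (w^T *m X *m w) 0 0 -> X *m w = lam *: w.
Proof.
move=> sX X_le w_ge; pose Q : 'M_n := lam%:M - X.
have formQ u : (u^T *m Q *m u) 0 0 = lam * (u^T *m u) 0 0 - (u^T *m X *m u) 0 0.
  by rewrite mulmxBr mulmxBl mul_mx_scalar -scalemxAl !mxE.
have sQ : Q^T = Q by rewrite linearB /= tr_scalar_mx sX.
have : Q *m w = 0.
  apply: psd_form_eq0 => //; first by move=> u; rewrite formQ subr_ge0.
  by rewrite formQ; apply/eqP; rewrite subr_eq0 eq_le X_le w_ge.
by rewrite mulmxBl mul_scalar_mx => /eqP; rewrite subr_eq0 => /eqP.
Qed.

Lemma connected_cut_edge (R : realFieldType) n (A : 'M[R]_n) (T : {set 'I_n}) a b :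
  A^T = A -> graph_connected A -> a \in T -> b \notin T ->
  exists k l, [/\ k \in T, l \notin T & 0 < A k l].
Proof.
move=> sA A_conn aT bT.
have [/existsP [k /existsP [l /and3P [kT lT Akl]]]|no_cut] :=
  boolP [exists k, exists l, [&& k \in T, l \notin T & 0 < A k l]].
  by exists k, l.
have cut k l : k \in T -> l \notin T -> 0 < A k l -> False.
  move=> kT lT Akl; apply: (negP no_cut).
  by apply/existsP; exists k; apply/existsP; exists l; apply/and3P.
have T_closed : closed (adj_in A [set: 'I_n]) T.
  move=> k l /and4P [_ _ _ Akl]; have Alk : 0 < A l k by rewrite -sA mxE.
  apply/idP/idP => [kT|lT]; apply/negPn/negP.
    by move=> lT; apply: (cut k l).
  by move=> kT; apply: (cut l k).
have := closed_connect T_closed (A_conn a b (in_setT a) (in_setT b)).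
by rewrite aT (negbTE bT).
Qed.

Lemma add_diag_mulmx_entry (R : pzSemiRingType) n (A : 'M[R]_n) (d : 'rV[R]_n)
    (w : 'cV[R]_n) k :
  ((A + diag_mx d) *m w) k 0 = \sum_l A k l * w l 0 + d 0 k * w k 0.
Proof. by rewrite mulmxDl mul_diag_mx !mxE. Qed.

Lemma add_diag_sym (R : pzSemiRingType) n (A : 'M[R]_n) (d : 'rV[R]_n) :
  A^T = A -> (A + diag_mx d)^T = A + diag_mx d.
Proof. by move=> sA; rewrite linearD /= sA tr_diag_mx. Qed.

Lemma modularity_sym (R : comPzRingType) n (A : 'M[R]_n) (d : 'rV[R]_n)
    (v : 'cV[R]_n) (sigma : R) :
  A^T = A -> (A + diag_mx d - sigma *: (v *m v^T))^T = A + diag_mx d - sigma *: (v *m v^T).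
Proof. by move=> sA; rewrite linearB linearZ /= add_diag_sym // trmx_mul trmxK. Qed.

Lemma adj_in_sym (R : realFieldType) n (A : 'M[R]_n) (S : {set 'I_n}) :
  A^T = A -> symmetric (adj_in A S).
Proof.
by move=> sA k l; apply/and4P/and4P => -[kS lS kl Akl]; split; rewrite // 1?eq_sym // -sA mxE.
Qed.

Lemma nontrivial_kernel2 (R : comNzRingType) (a b : R) :
  exists2 p : R * R, (p.1 != 0) || (p.2 != 0) & p.1 * a + p.2 * b = 0.
Proof.
have [->|a0] := eqVneq a 0; first by exists (1, 0); rewrite ?oner_neq0 // mulr0 mul0r addr0.
by exists (b, - a); rewrite /= ?oppr_eq0 ?a0 ?orbT // mulrC mulNr addrN.
Qed.

Section NonnegativePart.
Variables (R : realFieldType) (n : nat) (A : 'M[R]_n) (d : 'rV[R]_n).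
Variables (v : 'cV[R]_n) (sigma m : R) (z r : 'cV[R]_n).
Local Notation B := (A + diag_mx d).
Local Notation M := (A + diag_mx d - sigma *: (v *m v^T)).
Hypotheses (sA : A^T = A) (A_ge0 : forall i j, 0 <= A i j) (A_conn : graph_connected A).
Hypothesis M_le : forall u : 'cV[R]_n, (u^T *m M *m u) 0 0 <= m * (u^T *m u) 0 0.
Hypotheses (Bz : B *m z = m *: z + r) (r_ge0 : forall k, 0 <= r k 0).

Let S := [set k | 0 <= z k 0].

Definition excess k := r k 0 - \sum_(l | l \notin S) A k l * z l 0.

Lemma outside_lt0 l : l \notin S -> z l 0 < 0.
Proof. by rewrite inE -ltNge. Qed.

Lemma outside_term_le0 k l : l \notin S -> A k l * z l 0 <= 0.
Proof. by move=> lS; apply: mulr_ge0_le0 (A_ge0 k l) (ltW (outside_lt0 lS)). Qed.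

Lemma excess_ge0 k : 0 <= excess k.
Proof.
have : \sum_(l | l \notin S) A k l * z l 0 <= 0 by apply: sumr_le0 => l; apply: outside_term_le0.
by have := r_ge0 k; rewrite /excess; lra.
Qed.

Lemma excess_gt0 k l : l \notin S -> 0 < A k l -> 0 < excess k.
Proof.
move=> lS Akl; rewrite /excess (bigD1 l) //= subr_gt0.
have rest_le0 : \sum_(j | (j \notin S) && (j != l)) A k j * z j 0 <= 0.
  by apply: sumr_le0 => j /andP [jS _]; apply: outside_term_le0.
have l_lt0 : A k l * z l 0 < 0 by rewrite pmulr_rlt0 ?outside_lt0.
by have := r_ge0 k; lra.
Qed.

Section Reweighting.
Variable c : 'I_n -> R.
Hypotheses (c_out : forall k, k \notin S -> c k = 0)
  (c_edge : forall k l, k \in S -> l \in S -> 0 < A k l -> c k = c l).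
Let w := \col_k (c k * z k 0).

Lemma reweighted_defect k : k \in S -> (B *m w) k 0 - m * w k 0 = c k * excess k.
Proof.
move=> kS.
have Aw : \sum_l A k l * w l 0 = c k * \sum_(l in S) A k l * z l 0.
  rewrite (bigID (mem S)) /= [X in _ + X]big1 ?addr0 => [|l lS]; last first.
    by rewrite mxE c_out // mul0r mulr0.
  rewrite mulr_sumr; apply: eq_bigr => l lS; rewrite mxE.
  have [->|Akl] := eqVneq (A k l) 0; first by rewrite !mul0r mulr0.
  by rewrite (c_edge kS lS) ?lt_def ?Akl ?A_ge0 //; ring.
have Bzk := congr1 (fun X : 'cV[R]_n => X k 0) Bz.
rewrite /= add_diag_mulmx_entry (bigID (mem S)) /= !mxE in Bzk.
rewrite add_diag_mulmx_entry Aw /excess mxE.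
move: Bzk; set P := \sum_(l in S) _; set N := \sum_(l | _) _ => Bzk.
have -> : r k 0 = P + N + (d 0 k - m) * z k 0 by lra.
ring.
Qed.

Lemma reweighted_form_ge : m * (w^T *m w) 0 0 <= (w^T *m B *m w) 0 0.
Proof.
rewrite -mulmxA !col_dotE mulr_sumr -subr_ge0 -sumrB; apply: sumr_ge0 => k _.
have [kS|kS] := boolP (k \in S); last by rewrite mxE c_out // !mul0r mulr0 subrr.
rewrite mulrCA -mulrBr reweighted_defect // mxE mulrACA.
rewrite inE in kS; apply: mulr_ge0; first by rewrite -expr2 sqr_ge0.
exact: mulr_ge0 kS (excess_ge0 k).
Qed.

Lemma reweighted_defect_eq0 : v^T *m w = 0 -> forall k, k \in S -> c k * excess k = 0.
Proof.
move=> vw0 k kS.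
have Mw : M *m w = B *m w.
  by rewrite mulmxBl -scalemxAl -mulmxA vw0 mulmx0 scaler0 subr0.
have : M *m w = m *: w.
  apply: rayleigh_eq (modularity_sym d v sigma sA) M_le _.
  by rewrite -mulmxA Mw mulmxA reweighted_form_ge.
rewrite Mw => /(congr1 (fun X : 'cV[R]_n => X k 0)) /= Bw.
by rewrite -reweighted_defect // Bw mxE subrr.
Qed.

End Reweighting.

Lemma boundary_excess_gt0 (U : {set 'I_n}) a b :
  U \subset S -> (forall k l, k \in S -> l \in S -> 0 < A k l -> (k \in U) = (l \in U)) ->
  a \in U -> b \notin U -> exists2 k, k \in U & 0 < excess k.
Proof.
move=> US U_closed aU bU; have [k [l [kU lU Akl]]] := connected_cut_edge sA A_conn aU bU.
exists k => //; apply: (excess_gt0 (l := l)) => //; apply: contra lU => lS.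
by rewrite -(U_closed k) // (subsetP US).
Qed.

Lemma nonneg_part_connected : induced_connected A S.
Proof.
move=> i j iS jS; apply: contraT => not_ij.
pose U1 := [set k in S | connect (adj_in A S) i k]; pose U2 := S :\: U1.
have U1S : U1 \subset S by apply/subsetP => k; rewrite [k \in U1]inE => /andP [].
have iU1 : i \in U1 by rewrite [i \in U1]inE iS connect0.
have jU1 : j \notin U1 by rewrite [j \in U1]inE jS.
have U1_closed k l : k \in S -> l \in S -> 0 < A k l -> (k \in U1) = (l \in U1).
  move=> kS lS Akl; have [-> //|kl] := eqVneq k l.
  have e : adj_in A S k l by apply/and4P.
  rewrite [k \in U1]inE [l \in U1]inE kS lS /=.
  apply/idP/idP => h; apply: (connect_trans h (connect1 _)) => //.
  by rewrite adj_in_sym.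
have U2_closed k l : k \in S -> l \in S -> 0 < A k l -> (k \in U2) = (l \in U2).
  by move=> kS lS Akl; rewrite !in_setD kS lS (U1_closed k l).
have [k1 k1U1 k1_gt0] := boundary_excess_gt0 U1S U1_closed iU1 jU1.
have [k2 k2U2 k2_gt0] : exists2 k, k \in U2 & 0 < excess k.
  apply: (boundary_excess_gt0 _ U2_closed (a := j) (b := i));
  by rewrite ?subsetDl ?in_setD ?iU1 ?jU1.
pose zU (U : {set 'I_n}) : 'cV[R]_n := \col_k ((k \in U)%:R * z k 0).
have [[al be] /= al_be v_zU] := nontrivial_kernel2 ((v^T *m zU U1) 0 0) ((v^T *m zU U2) 0 0).
pose c k := al * (k \in U1)%:R + be * (k \in U2)%:R.
have c_out k : k \notin S -> c k = 0.
  move=> kS; have kU1 : k \notin U1 by apply: contra kS; apply: (subsetP U1S).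
  by rewrite /c in_setD (negbTE kS) (negbTE kU1) andbF !mulr0 addr0.
have c_edge k l : k \in S -> l \in S -> 0 < A k l -> c k = c l.
  by move=> kS lS Akl; rewrite /c (U1_closed k l) ?(U2_closed k l).
have v_w : v^T *m \col_k (c k * z k 0) = 0.
  have -> : \col_k (c k * z k 0) = al *: zU U1 + be *: zU U2.
    by apply/matrixP => k b; rewrite !mxE mulrDl !mulrA.
  rewrite mulmxDr -!scalemxAr; apply/matrixP => a b; rewrite !ord1.
  by move: v_zU; rewrite !mxE.
have c_excess := reweighted_defect_eq0 c_out c_edge v_w.
have k2U1 : k2 \notin U1 by move: k2U2; rewrite in_setD => /andP [].
have al0 : al = 0.
  have /eqP := c_excess k1 (subsetP U1S k1 k1U1).
  by rewrite /c k1U1 in_setD k1U1 /= mulf_eq0 (gt_eqF k1_gt0) orbF mulr1 mulr0 addr0 => /eqP.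
have be0 : be = 0.
  have /eqP := c_excess k2 (subsetP (subsetDl S U1) k2 k2U2).
  by rewrite /c k2U2 (negbTE k2U1) /= mulf_eq0 (gt_eqF k2_gt0) orbF mulr1 mulr0 add0r => /eqP.
by move: al_be; rewrite al0 be0 eqxx.
Qed.

End NonnegativePart.

Theorem theorem3p4 (R : rcfType) (n : nat)
  (A : 'M[R]_n) (d : 'rV[R]_n) (v : 'cV[R]_n) (sigma : R)
  (x y : 'cV[R]_n) (mG mu eps : R) :
  A^T = A ->
  (forall i j, 0 <= A i j) ->
  graph_connected A ->
  (forall i, 0 <= v i 0) -> v != 0 ->
  0 < sigma ->
  is_lambda1 (A + diag_mx d - sigma *: (v *m v^T)) mG ->
  x != 0 ->
  (A + diag_mx d - sigma *: (v *m v^T)) *m x = mG *: x ->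
  0 <= (v^T *m x) 0 0 ->
  is_lambda1 (A + diag_mx d) mu ->
  (A + diag_mx d) *m y = mu *: y ->
  (forall i, 0 < y i 0) ->
  0 <= eps ->
  induced_connected A [set i | 0 <= x i 0 + eps * y i 0].
Proof.
move=> sA A_ge0 A_conn v_ge0 _ sigma_gt0 [_ mG_max] x_neq0 Mx vx_ge0 [_ mu_max] By y_gt0 eps_ge0.
set vx := (v^T *m x) 0 0 in vx_ge0.
have Bx : (A + diag_mx d) *m x = mG *: x + (sigma * vx) *: v.
  by rewrite -Mx mulmxBl -scalemxAl -mulmxA [v^T *m x]mx11_scalar mul_mx_scalar scalerA subrK.
have mG_le_mu : mG <= mu.
  apply: (rayleigh_supereigen_le (add_diag_sym d sA) mu_max x_neq0 Bx).
  have xv : (x^T *m v) 0 0 = vx by rewrite /vx !col_dotE; apply: eq_bigr => k _; rewrite mulrC.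
  by rewrite -scalemxAr mxE xv !mulr_ge0 // ltW.
pose z := x + eps *: y.
pose r := (sigma * vx) *: v + (eps * (mu - mG)) *: y.
have Bz : (A + diag_mx d) *m z = mG *: z + r.
  by rewrite /z /r mulmxDr -scalemxAr Bx By; apply/matrixP => a b; rewrite !mxE; ring.
have r_ge0 k : 0 <= r k 0.
  have : 0 <= sigma * vx by rewrite mulr_ge0 // ltW.
  have : 0 <= eps * (mu - mG) by rewrite mulr_ge0 // subr_ge0.
  by have := v_ge0 k; have := y_gt0 k; rewrite !mxE; nra.
rewrite (_ : [set i | _] = [set i | 0 <= z i 0]); last by apply/setP => i; rewrite !inE !mxE.
have M_le := rayleigh_le (modularity_sym d v sigma sA) mG_max.
exact: nonneg_part_connected sA A_ge0 A_conn M_le Bz r_ge0.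
Qed.
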